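(* Let $\tau$ be a distributive triangle function on $\Delta^+$, $\Sigma$ a ring of subsets of $\Omega\ne\emptyset$, $\gamma$ a $\tau$-decomposable measure on $\Sigma$ and $E\in\Sigma$. Let $f,g:\Omega\to[0,+\infty]$ be measurable functions that are $\gamma$-integrable on $E$. Then: (i) if $f\le g$, then $\int_E f\,d\gamma\ge\int_E g\,d\gamma$; (ii) for every $c\in[0,\infty)$, $\int_E c\cdot f\,d\gamma=c\odot\int_E f\,d\gamma$. (In particular these hold for simple functions.)
   Context: $\Delta^+$: functions $F:[-\infty,+\infty]\to[0,1]$ non-decreasing, left-continuous on $\mathbb{R}$, $F(x)=0$ for $x\le0$, $F(+\infty)=1$, ordered pointwise; $\varepsilon_0(x)=1$ if $x>0$, else $0$. Triangle function: symmetric, associative $\tau:\Delta^+\times\Delta^+\to\Delta^+$, non-decreasing in each variable, identity $\varepsilon_0$; $G\oplus H=\tau(G,H)$, $\bigoplus_{k=1}^nG_k=\tau(G_1,\bigoplus_{k=2}^nG_k)$. $c\odot G=\varepsilon_0$ if $c=0$, $(c\odot G)(x)=G(x/c)$ if $c>0$; $\tau$ distributive if $c\odot(G\oplus H)=(c\odot G)\oplus(c\odot H)$ for all $c\ge0$. $\tau$-decomposable measure: $\gamma:\Sigma\to\Delta^+$, $\gamma_\emptyset=\varepsilon_0$, $\gamma_{A\cup B}=\tau(\gamma_A,\gamma_B)$ for disjoint $A,B\in\Sigma$. Simple function $\sum_{i=1}^nx_i\chi_{E_i}$ ($x_i\in[0,\infty)$, $E_i\in\Sigma$ pairwise disjoint),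 $\int_Ef\,d\gamma=\bigoplus_ix_i\odot\gamma_{E\cap E_i}$. Measurable: pointwise limit of simple functions. $\mathcal S_{f,E}$: simple $\mathfrak f$ with $\mathfrak f(t)\le f(t)$ for $t\in E$. $f$ is $\gamma$-integrable on $E$ if some $H\in\Delta^+$ satisfies $\int_E\mathfrak f\,d\gamma\ge H$ for all $\mathfrak f\in\mathcal S_{f,E}$; then $\int_Ef\,d\gamma=\inf\{\int_E\mathfrak f\,d\gamma:\mathfrak f\in\mathcal S_{f,E}\}$, infimum in $(\Delta^+,\le)$ (left-continuous regularization of the pointwise infimum). *)

From HB Require Import structures.
From mathcomp Require Import all_boot all_order all_algebra.
From mathcomp Require Import all_classical all_reals all_analysis.
Set Implicit Arguments. Unset Strict Implicit. Unset Printing Implicit Defensive.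
Import Order.TTheory GRing.Theory Num.Theory.
Import numFieldNormedType.Exports.
Local Open Scope classical_set_scope.
Local Open Scope ring_scope.

Section Defs.
Variable R : realType.

(* Distribution functions are modelled as raw functions [-oo,+oo] -> R;
   membership in Delta^+ is the predicate [inDelta]. *)
Definition dfun := \bar R -> R.

Definition inDelta (F : dfun) : Prop :=
  [/\ (forall x, 0 <= F x <= 1),
      (forall x y, (x <= y)%E -> F x <= F y),
      (forall x : R, (fun y : R => F y%:E) @ x^'- --> F x%:E),
      (forall x, (x <= 0)%E -> F x = 0) &
      F +oo%E = 1].

Definition dle (F G : dfun) : Prop := forall x, F x <= G x.

Definition eps0 : dfun := fun x => if (0 < x)%E then 1 else 0.

Definition triangle_function (tau : dfun -> dfun -> dfun) : Prop :=
  [/\ (forall F G, inDelta F -> inDelta G -> inDelta (tau F G)),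
      (forall F G, inDelta F -> inDelta G -> tau F G = tau G F),
      (forall F G H, inDelta F -> inDelta G -> inDelta H ->
          tau F (tau G H) = tau (tau F G) H),
      (forall F G H, inDelta F -> inDelta G -> inDelta H ->
          dle F G -> dle (tau F H) (tau G H)) &
      (forall F, inDelta F -> tau F eps0 = F)].

Definition odot (c : R) (G : dfun) : dfun :=
  fun x => if c == 0 then eps0 x else G (x * (c^-1)%:E)%E.

Definition distributive_tf (tau : dfun -> dfun -> dfun) : Prop :=
  forall (c : R) F G, 0 <= c -> inDelta F -> inDelta G ->
    odot c (tau F G) = tau (odot c F) (odot c G).

Variable Omega : Type.

Definition decomposable_measure (tau : dfun -> dfun -> dfun)
    (Sigma : set (set Omega)) (gamma : set Omega -> dfun) : Prop :=
  [/\ (forall A, Sigma A -> inDelta (gamma A)),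
      gamma set0 = eps0 &
      (forall A B, Sigma A -> Sigma B -> A `&` B = set0 ->
         gamma (A `|` B) = tau (gamma A) (gamma B))].

(* A simple function is given by a representation [:: (x_1,E_1); ...; (x_n,E_n)]
   with x_i in [0,oo), E_i in Sigma pairwise disjoint. *)
Definition simple_rep (Sigma : set (set Omega)) (s : seq (R * set Omega)) : Prop :=
  (forall p, p \in s -> 0 <= p.1 /\ Sigma p.2) /\
  (forall i j, (i < size s)%N -> (j < size s)%N -> i <> j ->
     (nth (0, set0) s i).2 `&` (nth (0, set0) s j).2 = set0).

Definition simple_val (s : seq (R * set Omega)) (t : Omega) : \bar R :=
  (\sum_(p <- s) p.1 * (\1_(p.2) t : R))%:E.

Definition bigoplus (tau : dfun -> dfun -> dfun) (Gs : seq dfun) : dfun :=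
  foldr tau eps0 Gs.

Definition simple_integral (tau : dfun -> dfun -> dfun) (gamma : set Omega -> dfun)
    (E : set Omega) (s : seq (R * set Omega)) : dfun :=
  bigoplus tau [seq odot p.1 (gamma (E `&` p.2)) | p <- s].

Definition gamma_measurable (Sigma : set (set Omega)) (f : Omega -> \bar R) : Prop :=
  exists s : nat -> seq (R * set Omega),
    (forall n, simple_rep Sigma (s n)) /\
    (forall t, (fun n => simple_val (s n) t) @ \oo --> f t).

Definition simple_below_integrals (tau : dfun -> dfun -> dfun) (Sigma : set (set Omega))
    (gamma : set Omega -> dfun) (f : Omega -> \bar R) (E : set Omega) : set dfun :=
  [set simple_integral tau gamma E s | s in
     [set s | simple_rep Sigma s /\ (forall t, E t -> (simple_val s t <= f t)%E)]].

Definition gamma_integrable (tau : dfun -> dfun -> dfun) (Sigma : set (set Omega))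
    (gamma : set Omega -> dfun) (f : Omega -> \bar R) (E : set Omega) : Prop :=
  exists H, inDelta H /\
    forall G, simple_below_integrals tau Sigma gamma f E G -> dle H G.

(* infimum in (Delta^+, <=): left-continuous regularization of the pointwise
   infimum on R; value 1 at +oo and 0 at -oo. *)
Definition dinf (S : set dfun) : dfun :=
  fun x => match x with
  | EFin r => sup [set inf [set G y%:E | G in S] | y in [set y : R | y < r]]
  | +oo%E => 1
  | -oo%E => 0
  end.

Definition gamma_integral (tau : dfun -> dfun -> dfun) (Sigma : set (set Omega))
    (gamma : set Omega -> dfun) (f : Omega -> \bar R) (E : set Omega) : dfun :=
  dinf (simple_below_integrals tau Sigma gamma f E).

End Defs.

From HB Require Import structures.
From mathcomp Require Import all_boot all_order all_algebra.
From mathcomp Require Import all_classical all_reals all_analysis.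
Import Order.TTheory GRing.Theory Num.Theory.
Import numFieldNormedType.Exports.
Local Open Scope classical_set_scope.
Local Open Scope ring_scope.

(* Everything reduces to the sets S_f of integrals of simple functions below f.
   If f <= g then S_f is contained in S_g, and a larger set has a smaller
   infimum.  For c > 0, s |-> c s maps the simple functions below f bijectively
   onto those below c f, and distributivity of tau gives
   int c s = c (.) int s; as c (.) _ merely rescales the argument, it commutes
   with the regularized infimum.  For c = 0, a simple function below 0 has zero
   coefficients on every set that meets E, so S_0 = {eps0}. *)

Section DistributionFunctions.
Variable R : realType.

Lemma eps0_inDelta : inDelta (@eps0 R).
Proof.
rewrite /eps0; split.
- by move=> x; case: ifP => _; rewrite ?lexx ?ler01.
- move=> x y xy; case: ifP => x0; case: ifP => y0 //=.
  by rewrite (lt_le_trans x0 xy) in y0.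
- move=> x /=; apply: cvg_near_cst; rewrite lte_fin; case: (ltrP 0 x) => x0.
  + by near=> y; rewrite lte_fin ifT //; near: y; exact: nbhs_left_gt.
  + near=> y; rewrite lte_fin ifF //; apply/negbTE; rewrite -leNgt.
    by apply: le_trans x0; apply: ltW; near: y; exact: nbhs_left_lt.
- by move=> x x0; rewrite ifF //; apply/negbTE; rewrite -leNgt.
- by rewrite ltry.
Unshelve. all: by end_near.
Qed.

Lemma odot0 (G : dfun R) : odot 0 G = @eps0 R.
Proof. by apply/funext => x; rewrite /odot eqxx. Qed.

Lemma odot_gt0 (c : R) (G : dfun R) : 0 < c -> odot c G = fun x => G (x * c^-1%:E)%E.
Proof. by move=> c0; apply/funext => x; rewrite /odot gt_eqF. Qed.

Lemma odot_inDelta (c : R) (G : dfun R) : 0 <= c -> inDelta G -> inDelta (odot c G).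
Proof.
rewrite le_eqVlt => /predU1P[<- _|c0 [G01 Gnd Glc G0 Goo]].
  by rewrite odot0; exact: eps0_inDelta.
have ci0 : 0 < c^-1 by rewrite invr_gt0.
rewrite odot_gt0 //; split => //.
- by move=> x y xy; apply: Gnd; rewrite lee_pmul2r.
- move=> x; apply: (@increasing_cvg_at_left_comp _ (fun y => y / c)
    (fun y => G y%:E) -oo%O) => //.
  + by move=> y z _ _; rewrite ltr_pM2r.
  + by apply: cvg_at_left_filter; exact: mulrr_continuous.
- move=> [r| |] //= r0; apply: G0.
  + by rewrite -EFinM lee_fin pmulr_lle0 // -lee_fin.
  + by rewrite gt0_mulNye ?lte_fin.
- by rewrite gt0_mulye ?lte_fin.
Qed.

Lemma odot_eps0 (c : R) : 0 <= c -> odot c (@eps0 R) = @eps0 R.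
Proof.
rewrite le_eqVlt => /predU1P[<-|c0]; first exact: odot0.
have ci0 : 0 < c^-1 by rewrite invr_gt0.
rewrite odot_gt0 //; apply/funext => -[r| |]; rewrite /eps0 /=.
- by rewrite -EFinM !lte_fin pmulr_lgt0.
- by rewrite gt0_mulye ?lte_fin.
- by rewrite gt0_mulNye ?lte_fin.
Qed.

Lemma odotM (c d : R) (G : dfun R) : 0 < c -> 0 <= d ->
  odot (c * d) G = odot c (odot d G).
Proof.
move=> c0; rewrite le_eqVlt => /predU1P[<-|d0]; first by rewrite mulr0 !odot0 odot_eps0 ?ltW.
by rewrite !odot_gt0 ?mulr_gt0 //; apply/funext => x; rewrite invfM EFinM muleA.
Qed.

Lemma dinf_odot (c : R) (S : set (dfun R)) : 0 < c ->
  dinf (odot c @` S) = odot c (dinf S).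
Proof.
move=> c0; rewrite [RHS]odot_gt0 //; apply/funext => -[r| |] /=; last 2 first.
- by rewrite gt0_mulye // lte_fin invr_gt0.
- by rewrite gt0_mulNye // lte_fin invr_gt0.
have values_at y : [set G y%:E | G in odot c @` S] = [set G (y / c)%:E | G in S].
  apply/seteqP; split => v.
  + by case=> _ [G SG <-] <-; exists G; rewrite // odot_gt0.
  + by case=> G SG <-; exists (odot c G); [exists G|rewrite odot_gt0].
congr sup; apply/seteqP; split => v.
- case=> y ry <-; exists (y / c); last by rewrite values_at.
  by rewrite /= ltr_pM2r ?invr_gt0.
- case=> z zr <-; exists (z * c); last by rewrite values_at mulfK ?gt_eqF.
  by rewrite /= -ltr_pdivlMr.
Qed.

Lemma dinf_le_subset {S T : set (dfun R)} {H F : dfun R} : S `<=` T ->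
  (forall G, T G -> dle H G) -> S F -> inDelta F -> dle (dinf T) (dinf S).
Proof.
move=> ST HT SF [F01 _ _ _ _] [r| |] //=.
have lbT y : has_lbound [set G y%:E | G in T].
  by exists (H y%:E) => _ [G TG <-]; exact: HT.
have lbS y : has_lbound [set G y%:E | G in S].
  by exists (H y%:E) => _ [G SG <-]; exact/HT/ST.
have neS y : [set G y%:E | G in S] !=set0 by exists (F y%:E), F.
have r1r : r - 1 < r by rewrite ltrBlDr ltrDl.
apply: sup_le.
- move=> _ [y yr <-]; exists (inf [set G y%:E | G in S]); split; first by exists y.
  by apply: lb_le_inf => // _ [G SG <-]; apply: ge_inf; [exact: lbT|exists G; first exact: ST].
- by exists (inf [set G (r - 1)%:E | G in T]), (r - 1).
- split; first by exists (inf [set G (r - 1)%:E | G in S]), (r - 1).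
  exists 1 => _ [y _ <-]; apply: le_trans (ge_inf (lbS y) _) _; first by exists F.
  by have /andP[] := F01 y%:E.
Qed.

Lemma dinf_set1_eps0 : dinf [set @eps0 R] = @eps0 R.
Proof.
apply/funext => -[r| |] /=; last 2 first; [by rewrite /eps0 ltry|by []|].
have -> : [set inf [set G y%:E | G in [set @eps0 R]] | y in [set y | y < r]]
    = [set @eps0 R y%:E | y in [set y | y < r]].
  by apply/seteqP; split => _ [y yr <-]; exists y; rewrite // image_set1 inf1.
have eps0_le1 y : @eps0 R y <= 1 by rewrite /eps0; case: ifP.
rewrite [RHS]/eps0 lte_fin; case: (ltrP 0 r) => r0.
- apply/le_anti/andP; split.
  + apply: ge_sup; last by move=> _ [y _ <-]; exact: eps0_le1.
    by exists (@eps0 R (r - 1)%:E), (r - 1); rewrite //= ltrBlDr ltrDl.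
  + apply: le_trans (ub_le_sup _ _); last first.
      by exists (r / 2); rewrite //= ltr_pdivrMr // ltr_pMr // ltr1n.
    * by exists 1 => _ [y _ <-]; exact: eps0_le1.
    * by rewrite /eps0 lte_fin divr_gt0.
- suff -> : [set @eps0 R y%:E | y in [set y | y < r]] = [set 0] by rewrite sup1.
  have eps0_le0 y : y <= r -> @eps0 R y%:E = 0.
    by move=> yr; rewrite /eps0 lte_fin ifF //; apply/negbTE; rewrite -leNgt (le_trans yr).
  apply/seteqP; split => v.
  + by case=> y /= /ltW yr <-; rewrite eps0_le0.
  + move=> ->; exists (r - 1); last by rewrite eps0_le0 // lerBlDr lerDl.
    by rewrite /= ltrBlDr ltrDl.
Qed.

End DistributionFunctions.

Section SimpleIntegrals.
Variables (R : realType) (Omega : Type).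
Variables (tau : dfun R -> dfun R -> dfun R) (Sigma : set (set Omega))
  (gamma : set Omega -> dfun R) (E : set Omega).
Hypotheses (htau : triangle_function tau) (hring : setring Sigma)
  (hgamma : decomposable_measure tau Sigma gamma) (hE : Sigma E).

Definition scale_rep (k : R) (s : seq (R * set Omega)) : seq (R * set Omega) :=
  [seq (k * p.1, p.2) | p <- s].

Definition nonneg_rep (s : seq (R * set Omega)) : Prop :=
  forall p, p \in s -> 0 <= p.1 /\ Sigma p.2.

Lemma simple_val_scale k s t : simple_val (scale_rep k s) t = (k%:E * simple_val s t)%E.
Proof.
rewrite /simple_val big_map -EFinM mulr_sumr; congr EFin.
by apply: eq_bigr => p _; rewrite mulrA.
Qed.

Lemma simple_rep_scale {k s} : 0 <= k -> simple_rep Sigma s -> simple_rep Sigma (scale_rep k s).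
Proof.
move=> k0 [s_nonneg s_disj]; split.
- move=> _ /mapP[p ps ->] /=; have [p0 pS] := s_nonneg p ps.
  by split; first exact: mulr_ge0.
- move=> i j; rewrite size_map => ilt jlt ij.
  by rewrite !(nth_map (0, set0)) //=; exact: s_disj.
Qed.

Lemma scale_repK (c : R) : c != 0 -> cancel (scale_rep c^-1) (scale_rep c).
Proof.
move=> c0 s; rewrite /scale_rep -map_comp -[RHS]map_id.
by apply: eq_map => -[x A] /=; rewrite mulrA mulfV // mul1r.
Qed.

Lemma odot_gamma_inDelta (x : R) (A : set Omega) : 0 <= x -> Sigma A ->
  inDelta (odot x (gamma (E `&` A))).
Proof.
have [gamma_inDelta _ _] := hgamma.
have SigmaI : setI_closed Sigma by case: hring => _ _ /setD_closedP[].
by move=> x0 SA; apply: odot_inDelta => //; apply: gamma_inDelta; exact: SigmaI.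
Qed.

Lemma nonneg_rep_cons p s : nonneg_rep (p :: s) -> (0 <= p.1 /\ Sigma p.2) /\ nonneg_rep s.
Proof. by move=> ps; split=> [|q qs]; apply: ps; rewrite inE ?eqxx ?qs ?orbT. Qed.

Lemma simple_integral_inDelta {s} : nonneg_rep s -> inDelta (simple_integral tau gamma E s).
Proof.
have [tau_inDelta _ _ _ _] := htau.
elim: s => [_|p s IH /nonneg_rep_cons[[p0 pS] s_nonneg]]; first exact: eps0_inDelta.
by apply: tau_inDelta; [exact: odot_gamma_inDelta | exact: IH].
Qed.

Lemma simple_integral_scale c s : distributive_tf tau -> 0 < c -> nonneg_rep s ->
  simple_integral tau gamma E (scale_rep c s) = odot c (simple_integral tau gamma E s).
Proof.
move=> hdist c0; elim: s => [_|p s IH /nonneg_rep_cons[[p0 pS] s_nonneg]].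
  by rewrite /= odot_eps0 ?ltW.
have := simple_integral_inDelta s_nonneg; rewrite /simple_integral /bigoplus /= in IH *.
by move=> s_inDelta; rewrite IH // hdist ?ltW ?odotM //; exact: odot_gamma_inDelta.
Qed.

Lemma simple_rep_nonneg s : simple_rep Sigma s -> nonneg_rep s.
Proof. by case. Qed.

Lemma simple_below_integrals_eps0 (f : Omega -> \bar R) : (forall t, E t -> (0 <= f t)%E) ->
  simple_below_integrals tau Sigma gamma f E (@eps0 R).
Proof. by move=> f0; exists [::]; split => [|t Et]; rewrite ?/simple_val ?big_nil ?f0. Qed.

Lemma simple_below_integrals_le (f g : Omega -> \bar R) : (forall t, (f t <= g t)%E) ->
  simple_below_integrals tau Sigma gamma f E `<=` simple_below_integrals tau Sigma gamma g E.
Proof.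
move=> fg _ [s [s_rep s_le] <-]; exists s => //; split => // t Et.
exact: le_trans (s_le t Et) (fg t).
Qed.

Lemma simple_below_integrals_scale (c : R) (f : Omega -> \bar R) :
  distributive_tf tau -> 0 < c ->
  simple_below_integrals tau Sigma gamma (fun t => (c%:E * f t)%E) E
  = odot c @` simple_below_integrals tau Sigma gamma f E.
Proof.
move=> hdist c0; have ci0 : 0 <= c^-1 by rewrite invr_ge0 ltW.
apply/seteqP; split => G.
- case=> s [s_rep s_le] <-; have s'_rep := simple_rep_scale ci0 s_rep.
  exists (simple_integral tau gamma E (scale_rep c^-1 s)).
    exists (scale_rep c^-1 s) => //; split => // t Et.
    rewrite simple_val_scale; apply: le_trans (lee_wpmul2l _ (s_le t Et)) _.
      by rewrite lee_fin.
    by rewrite muleA -EFinM mulVf ?mul1e ?gt_eqF.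
  by rewrite -simple_integral_scale ?scale_repK ?gt_eqF //; exact: simple_rep_nonneg.
- case=> _ [s [s_rep s_le] <-] <-; exists (scale_rep c s).
    split => [|t Et]; first exact: simple_rep_scale (ltW c0) s_rep.
    by rewrite simple_val_scale; apply: lee_wpmul2l; [rewrite lee_fin ltW|exact: s_le].
  by rewrite simple_integral_scale //; exact: simple_rep_nonneg.
Qed.

Lemma simple_val_le0_summand {s t p} : nonneg_rep s -> (simple_val s t <= 0)%E ->
  p \in s -> p.2 t -> p.1 = 0.
Proof.
move=> s_nonneg st0 ps pt.
have term_ge0 q : q \in s -> 0 <= q.1 * (\1_(q.2) t : R).
  by move=> qs; rewrite indicE mulr_ge0 //; case: (s_nonneg q qs).
have : \sum_(q <- s) q.1 * (\1_(q.2) t : R) = 0.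
  by apply/le_anti; rewrite -lee_fin st0 big_seq sumr_ge0.
rewrite big_seq => /eqP; rewrite psumr_eq0 // => /allP /(_ p ps).
by rewrite ps indicE mem_set // mulr1 => /eqP.
Qed.

Lemma simple_integral_le0 s : nonneg_rep s -> (forall t, E t -> (simple_val s t <= 0)%E) ->
  simple_integral tau gamma E s = @eps0 R.
Proof.
move=> s_nonneg s_le0; have [_ _ _ _ tau_eps0] := htau; have [_ gamma0 _] := hgamma.
have summand_eps0 p : p \in s -> odot p.1 (gamma (E `&` p.2)) = @eps0 R.
  move=> ps; have [p0 _] := s_nonneg p ps.
  have [Ep|/set0P[t [Et pt]]] := eqVneq (E `&` p.2) set0; first by rewrite Ep gamma0 odot_eps0.
  by rewrite (simple_val_le0_summand s_nonneg (s_le0 t Et) ps pt) odot0.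
elim: s {s_le0} s_nonneg summand_eps0 => [//|p s IH] /nonneg_rep_cons[_ s_nonneg] summand_eps0.
rewrite /simple_integral /bigoplus /= in IH *.
rewrite summand_eps0 ?mem_head // IH // => [|q qs]; first exact: tau_eps0 (eps0_inDelta R).
by apply: summand_eps0; rewrite inE qs orbT.
Qed.

Lemma simple_below_integrals_cst0 :
  simple_below_integrals tau Sigma gamma (fun=> 0%E) E = [set @eps0 R].
Proof.
apply/seteqP; split => G; last by move=> ->; exact: simple_below_integrals_eps0.
case=> s [s_rep s_le0] <-; apply: simple_integral_le0 s_le0; exact: simple_rep_nonneg.
Qed.

End SimpleIntegrals.

Theorem theorem4p7 (R : realType) (Omega : Type) (omega0 : Omega)
    (tau : dfun R -> dfun R -> dfun R)
    (Sigma : set (set Omega)) (gamma : set Omega -> dfun R) (E : set Omega)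
    (f g : Omega -> \bar R) :
  triangle_function tau -> distributive_tf tau ->
  setring Sigma -> decomposable_measure tau Sigma gamma -> Sigma E ->
  (forall t, (0 <= f t)%E) -> (forall t, (0 <= g t)%E) ->
  gamma_measurable Sigma f -> gamma_measurable Sigma g ->
  gamma_integrable tau Sigma gamma f E -> gamma_integrable tau Sigma gamma g E ->
  ((forall t, (f t <= g t)%E) ->
     dle (gamma_integral tau Sigma gamma g E) (gamma_integral tau Sigma gamma f E)) /\
  (forall c : R, 0 <= c ->
     gamma_integral tau Sigma gamma (fun t => (c%:E * f t)%E) E
     = odot c (gamma_integral tau Sigma gamma f E)).
Proof.
move=> htau hdist hring hgamma hE f0 g0 _ _ _ [H [_ H_lb]]; split.
  move=> fg; rewrite /gamma_integral.
  apply: (dinf_le_subset _ _ H_lb _ (eps0_inDelta R)).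
  - exact: simple_below_integrals_le.
  - by apply: simple_below_integrals_eps0 => t _.
move=> c; rewrite le_eqVlt => /predU1P[<-|c0]; rewrite /gamma_integral.
  have -> : (fun t => (0%:E * f t)%E) = fun=> 0%E by apply/funext => t; rewrite mul0e.
  by rewrite odot0 simple_below_integrals_cst0 // dinf_set1_eps0.
by rewrite simple_below_integrals_scale // dinf_odot.
Qed.
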